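(* Fix $R>0$, an integer $T>1$ and $\alpha>1$. Let $\Theta_1=(\alpha,\rho_{r_1},\rho_{d_1},\rho_{s_1},\rho_{0_1},T)$ and $\Theta_2=(\alpha,\rho_{r_2},\rho_{d_2},\rho_{s_2},\rho_{0_2},T)$ with all $\rho$'s positive. If $\rho_{r_2}\ge\rho_{r_1}$, $\rho_{d_2}\ge\rho_{d_1}$, $\rho_{s_2}\ge\rho_{s_1}$ and $\rho_{0_2}\ge\rho_{0_1}$, with at least one of these inequalities strict, then $\zeta^\star_{zf}(R,\Theta_1)>\zeta^\star_{zf}(R,\Theta_2)$.
   Context: For $\Theta=(\alpha,\rho_r,\rho_d,\rho_s,\rho_0,T)$ with $\alpha>1$, $\rho_r,\rho_d,\rho_s,\rho_0>0$, integer $T>1$, and $R>0$: for $M>K$, $1\le K\le\tau<T$ let $$\gamma_u=\frac{K+\tau}{2\tau(M-K)}\Big(2^{\frac{R}{K(1-\tau/T)}}-1\Big)+\sqrt{\Big(\frac{K+\tau}{2\tau(M-K)}\Big(2^{\frac{R}{K(1-\tau/T)}}-1\Big)\Big)^2+\frac{2^{\frac{R}{K(1-\tau/T)}}-1}{\tau(M-K)}}$$ and define $\zeta_{zf}(M,K,\tau,R,\Theta)>0$ by $$\frac{R}{\zeta_{zf}(M,K,\tau,R,\Theta)}=\alpha K\gamma_u+\rho_s+K\Big(\rho_d+\frac{8K^2\rho_0}{3T}\Big)+M\Big(\rho_r+2K\rho_0+\frac{4K^2\rho_0}{T}\Big).$$ $\zeta^\star_{zf}(R,\Theta)$ is the maximum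 of $\zeta_{zf}(M,K,\tau,R,\Theta)$ over integers $(M,K,\tau)$ with $1\le K\le\tau<T$ and $M>K$. *)

From HB Require Import structures.
From mathcomp Require Import all_boot all_order all_algebra.
From mathcomp Require Import all_classical all_reals all_analysis.
Set Implicit Arguments. Unset Strict Implicit. Unset Printing Implicit Defensive.
Import Order.TTheory GRing.Theory Num.Theory.
Local Open Scope classical_set_scope.
Local Open Scope ring_scope.

Section ZF.
Variable R : realType.

Definition zf_e (Rt : R) (K tau T : nat) : R :=
  powR 2 (Rt / (K%:R * (1 - tau%:R / T%:R))) - 1.

Definition gamma_u (Rt : R) (M K tau T : nat) : R :=
  let e := zf_e Rt K tau T in
  let a := (K%:R + tau%:R) / (2 * tau%:R * (M%:R - K%:R)) * e in
  a + Num.sqrt (a ^+ 2 + e / (tau%:R * (M%:R - K%:R))).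

Definition zeta_zf (M K tau : nat) (Rt alpha rho_r rho_d rho_s rho_0 : R) (T : nat) : R :=
  Rt / (alpha * K%:R * gamma_u Rt M K tau T + rho_s
        + K%:R * (rho_d + 8 * K%:R ^+ 2 * rho_0 / (3 * T%:R))
        + M%:R * (rho_r + 2 * K%:R * rho_0 + 4 * K%:R ^+ 2 * rho_0 / T%:R)).

Definition zeta_zf_values (Rt alpha rho_r rho_d rho_s rho_0 : R) (T : nat) : set R :=
  [set z | exists M K tau : nat,
      [/\ (1 <= K)%N, (K <= tau)%N, (tau < T)%N, (K < M)%N &
          z = zeta_zf M K tau Rt alpha rho_r rho_d rho_s rho_0 T]].

(* zeta*_zf(R,Theta): the maximum (taken as the supremum; it is attained) *)
Definition zeta_star_zf (Rt alpha rho_r rho_d rho_s rho_0 : R) (T : nat) : R :=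
  sup (zeta_zf_values Rt alpha rho_r rho_d rho_s rho_0 T).
End ZF.

From mathcomp Require Import all_boot all_order all_algebra.
From mathcomp Require Import all_classical all_reals all_analysis.
From mathcomp Require Import ring lra.
Import Order.TTheory GRing.Theory Num.Theory.
Local Open Scope classical_set_scope.
Local Open Scope ring_scope.

(* zeta_zf is R divided by a total power [zf_power].  Raising the rho's by
   nonnegative amounts, not all zero, raises the power of every configuration
   (M, K, tau) by at least a fixed delta > 0.  If S is the optimal efficiency
   for Theta_1, every configuration has power at least R / S under Theta_1,
   hence at least R / S + delta under Theta_2, so the optimum for Theta_2 is at
   most R / (R / S + delta) < S. *)

Section ZeroForcing.
Variable R : realType.

Lemma zf_e_ge0 (Rt : R) (K tau T : nat) :
  0 <= Rt -> (tau <= T)%N -> 0 <= zf_e Rt K tau T.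
Proof.
move=> Rt0 tauT; rewrite /zf_e subr_ge0 -[X in X <= _](powRr0 2).
apply: ler_powR; first lra.
apply: divr_ge0 => //; apply: mulr_ge0; first exact: ler0n.
rewrite subr_ge0; have [->|T0] := posnP T.
  by rewrite invr0 mulr0 ler01.
by rewrite ler_pdivrMr ?ltr0n // mul1r ler_nat.
Qed.

Lemma gamma_u_ge0 (Rt : R) (M K tau T : nat) :
  0 <= Rt -> (tau <= T)%N -> (K <= M)%N -> 0 <= gamma_u Rt M K tau T.
Proof.
move=> Rt0 tauT KM; rewrite /gamma_u; apply: addr_ge0; last exact: sqrtr_ge0.
apply: mulr_ge0; last exact: zf_e_ge0.
rewrite divr_ge0 ?addr_ge0 ?ler0n // !mulr_ge0 ?ler0n //.
by rewrite subr_ge0 ler_nat.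
Qed.

Definition zf_power (Rt alpha : R) (M K tau T : nat) (r d s o : R) : R :=
  alpha * K%:R * gamma_u Rt M K tau T + s
  + K%:R * (d + 8 * K%:R ^+ 2 * o / (3 * T%:R))
  + M%:R * (r + 2 * K%:R * o + 4 * K%:R ^+ 2 * o / T%:R).

Lemma zf_power_ge (Rt alpha : R) (M K tau T : nat) (r d s o : R) :
  0 <= alpha -> 0 <= gamma_u Rt M K tau T -> 0 <= r -> 0 <= d -> 0 <= o ->
  s <= zf_power Rt alpha M K tau T r d s o.
Proof.
move=> a0 g0 r0 d0 o0; rewrite /zf_power.
have Kg : 0 <= alpha * K%:R * gamma_u Rt M K tau T by rewrite !mulr_ge0.
have Kd : 0 <= K%:R * (d + 8 * K%:R ^+ 2 * o / (3 * T%:R)).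
  by rewrite mulr_ge0 ?addr_ge0 ?divr_ge0 ?mulr_ge0 ?sqr_ge0.
have Mr : 0 <= M%:R * (r + 2 * K%:R * o + 4 * K%:R ^+ 2 * o / T%:R).
  by rewrite mulr_ge0 ?addr_ge0 ?divr_ge0 ?mulr_ge0 ?sqr_ge0.
lra.
Qed.

Lemma zf_power_shift (Rt alpha : R) (M K tau T : nat) (r1 d1 s1 o1 r2 d2 s2 o2 : R) :
  (1 <= K)%N -> (1 <= M)%N ->
  r1 <= r2 -> d1 <= d2 -> s1 <= s2 -> o1 <= o2 ->
  zf_power Rt alpha M K tau T r1 d1 s1 o1
    + ((r2 - r1) + (d2 - d1) + (s2 - s1) + 2 * (o2 - o1))
  <= zf_power Rt alpha M K tau T r2 d2 s2 o2.
Proof.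
move=> K1 M1 hr hd hs ho.
have k1 : 1 <= K%:R :> R by rewrite ler1n.
have m1 : 1 <= M%:R :> R by rewrite ler1n.
have ko : 0 <= K%:R * (o2 - o1) :> R by apply: mulr_ge0; lra.
have A : 0 <= 8 * K%:R ^+ 2 * (o2 - o1) / (3 * T%:R) :> R.
  by rewrite divr_ge0 ?mulr_ge0 ?sqr_ge0 ?ler0n ?subr_ge0.
have B : 0 <= 4 * K%:R ^+ 2 * (o2 - o1) / T%:R :> R.
  by rewrite divr_ge0 ?mulr_ge0 ?sqr_ge0 ?ler0n ?subr_ge0.
have -> : zf_power Rt alpha M K tau T r2 d2 s2 o2
  = zf_power Rt alpha M K tau T r1 d1 s1 o1 + (s2 - s1)
    + K%:R * ((d2 - d1) + 8 * K%:R ^+ 2 * (o2 - o1) / (3 * T%:R))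
    + M%:R * ((r2 - r1) + 2 * (K%:R * (o2 - o1)) + 4 * K%:R ^+ 2 * (o2 - o1) / T%:R).
  by rewrite /zf_power; ring.
nra.
Qed.

Definition zf_configs (T : nat) : set (nat * nat * nat) :=
  [set c | [/\ (1 <= c.1.2)%N, (c.1.2 <= c.2)%N, (c.2 < T)%N & (c.1.2 < c.1.1)%N]].

Lemma zeta_zf_valuesE (Rt alpha r d s o : R) (T : nat) :
  zeta_zf_values Rt alpha r d s o T
  = [set Rt / zf_power Rt alpha c.1.1 c.1.2 c.2 T r d s o | c in zf_configs T].
Proof.
apply/seteqP; split=> z.
  by case=> M [K [tau [K1 Kt tT KM ->]]]; exists (M, K, tau).
by case=> -[[M K] tau] [K1 Kt tT KM] <-; exists M, K, tau.
Qed.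

Lemma sup_div_lt_of_gap (I : Type) (P : set I) (Rt m delta : R) (D1 D2 : I -> R) :
  0 < Rt -> 0 < m -> 0 < delta -> P !=set0 ->
  (forall i, P i -> m <= D1 i) -> (forall i, P i -> D1 i + delta <= D2 i) ->
  sup [set Rt / D2 i | i in P] < sup [set Rt / D1 i | i in P].
Proof.
move=> Rt0 m0 delta0 [i0 Pi0] D1m gap.
set S := sup [set Rt / D1 i | i in P].
have D1_gt0 i : P i -> 0 < D1 i by move=> Pi; exact: lt_le_trans m0 (D1m _ Pi).
have supS : has_sup [set Rt / D1 i | i in P].
  split; first by exists (Rt / D1 i0), i0.
  exists (Rt / m) => _ [i Pi <-].
  by rewrite ler_pM2l // lef_pV2 ?posrE ?D1m ?D1_gt0.
have le_S i : P i -> Rt / D1 i <= S.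
  by move=> Pi; apply: (sup_upper_bound supS); exists i.
have S0 : 0 < S by apply: lt_le_trans (le_S _ Pi0); rewrite divr_gt0 ?D1_gt0.
have D1S i : P i -> Rt / S <= D1 i.
  by move=> Pi; rewrite ler_pdivrMr // mulrC -ler_pdivrMr ?D1_gt0 ?le_S.
have RtS0 : 0 < Rt / S by rewrite divr_gt0.
apply: (@le_lt_trans _ _ (Rt / (Rt / S + delta))).
  apply: ge_sup; first by exists (Rt / D2 i0), i0.
  move=> _ [i Pi <-]; rewrite ler_pM2l // lef_pV2 ?posrE ?addr_gt0 //.
    by apply: le_trans (gap _ Pi); rewrite lerD2r D1S.
  by apply: lt_le_trans (gap _ Pi); rewrite ltr_wpDr ?D1_gt0 // ltW.
rewrite ltr_pdivrMr ?addr_gt0 // mulrDr mulrCA mulfV ?gt_eqF // mulr1.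
by rewrite ltrDl mulr_gt0.
Qed.

End ZeroForcing.

Theorem theorem1 (R : realType) (Rt alpha : R) (T : nat)
    (r1 d1 s1 o1 r2 d2 s2 o2 : R) :
  0 < Rt -> (1 < T)%N -> 1 < alpha ->
  0 < r1 -> 0 < d1 -> 0 < s1 -> 0 < o1 ->
  0 < r2 -> 0 < d2 -> 0 < s2 -> 0 < o2 ->
  r1 <= r2 -> d1 <= d2 -> s1 <= s2 -> o1 <= o2 ->
  (r1 < r2 \/ d1 < d2 \/ s1 < s2 \/ o1 < o2) ->
  zeta_star_zf Rt alpha r2 d2 s2 o2 T < zeta_star_zf Rt alpha r1 d1 s1 o1 T.
Proof.
move=> Rt0 T1 a1 r10 d10 s10 o10 _ _ _ _ hr hd hs ho strict.
rewrite /zeta_star_zf !zeta_zf_valuesE.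
apply: (@sup_div_lt_of_gap R _ _ Rt s1
          ((r2 - r1) + (d2 - d1) + (s2 - s1) + 2 * (o2 - o1))).
- exact: Rt0.
- exact: s10.
- by case: strict => [|[|[|]]]; lra.
- by exists (2, 1, 1)%N.
- move=> [[M K] tau] /= [_ Kt tT KM].
  apply: zf_power_ge; [lra | | lra | lra | lra].
  by apply: gamma_u_ge0; [exact: ltW | exact: ltnW | exact: ltnW].
- move=> [[M K] tau] /= [K1 _ _ KM].
  by apply: zf_power_shift => //; apply: leq_trans KM.
Qed.
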